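(* Let $(J,{\sf hn})$ be a hyperbolic Banach space where $J$ is a cone with joins, and let $\tau$ be the chronological topology induced by ${\sf hn}$. Then the intersection of any countable family of $\tau$-open and $\tau$-dense subsets of $J$ is $\tau$-dense.
   Context: A prewedge is a set $W$ with a commutative associative addition with neutral element $0$ and a multiplication $[0,\infty)\times W\to W$ such that $\lambda(\eta v)=(\lambda\eta)v$, $0v=0$, $1v=v$, $(\lambda+\eta)v=\lambda v+\eta v$, $\lambda(v+w)=\lambda v+\lambda w$; it carries the preorder $v\le w$ iff $v+z=w$ for some $z$. A wedge is a prewedge in which $\le$ is antisymmetric and $v=\sup_{\eta<1}\eta v$ for every $v$. A cone is a wedge in which every directed subset (one in which every finite subset, including the empty one, has an upper bound in it) has a supremum. A cone with joins is a cone $J$ in which every subset $A$ has an infimum and $\inf(v+A)=v+\inf A$ for all $v\in J$, $A\subset J$. A hyperbolic norm on $J$ is a map ${\sf hn}:J\to[0,\infty]$ with ${\sf hn}(0)=0$ and ${\sf hn}(\lambda_1v_1+\lambda_2v_2)\ge\lambda_1{\sf hn}(v_1)+\lambda_2{\sf hn}(v_2)$ for all $\lambda_i\ge0$; a hyperbolic Banach space is a cone with a hyperbolic norm. Write $v\ll w$ if there is $z$ with ${\sf hn}(z)>0$ and $v+z=w$. The chronological topology is the topology generated by the sets $I^+(v):=\{w:v\ll w\}$ and $I^-(v):=\{w:w\ll v\}$, $v\in J$. *)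

From Stdlib Require Import Reals List.
From Coquelicot Require Import Rbar.
Open Scope R_scope.
Set Implicit Arguments.

Section Cones.
Variable J : Type.
Variable add : J -> J -> J.
Variable zero : J.
Variable smul : R -> J -> J.  (* only used with nonnegative scalars *)

Definition prewedge : Prop :=
  (forall u v, add u v = add v u) /\
  (forall u v w, add u (add v w) = add (add u v) w) /\
  (forall v, add zero v = v) /\
  (forall l e v, 0 <= l -> 0 <= e -> smul l (smul e v) = smul (l * e) v) /\
  (forall v, smul 0 v = zero) /\
  (forall v, smul 1 v = v) /\
  (forall l e v, 0 <= l -> 0 <= e -> smul (l + e) v = add (smul l v) (smul e v)) /\
  (forall l v w, 0 <= l -> smul l (add v w) = add (smul l v) (smul l w)).

Definition jle (v w : J) : Prop := exists z, add v z = w.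

Definition is_ub (A : J -> Prop) (u : J) : Prop := forall a, A a -> jle a u.
Definition is_lb (A : J -> Prop) (l : J) : Prop := forall a, A a -> jle l a.
Definition is_sup (A : J -> Prop) (s : J) : Prop :=
  is_ub A s /\ forall u, is_ub A u -> jle s u.
Definition is_inf (A : J -> Prop) (i : J) : Prop :=
  is_lb A i /\ forall l, is_lb A l -> jle l i.

Definition wedge : Prop :=
  prewedge /\
  (forall v w, jle v w -> jle w v -> v = w) /\
  (forall v, is_sup (fun w => exists e, 0 <= e /\ e < 1 /\ w = smul e v) v).

(* every finite subset (given as a list, possibly empty) has an upper bound in A *)
Definition directed (A : J -> Prop) : Prop :=
  forall l : list J, (forall x, In x l -> A x) ->
    exists u, A u /\ forall x, In x l -> jle x u.

Definition cone : Prop :=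
  wedge /\ forall A, directed A -> exists s, is_sup A s.

Definition cone_with_joins : Prop :=
  cone /\
  (forall A : J -> Prop, exists i, is_inf A i) /\
  (forall (v : J) (A : J -> Prop) (i : J), is_inf A i ->
     is_inf (fun w => exists a, A a /\ w = add v a) (add v i)).

(* hyperbolic norm with values in [0,oo]; Rbar_mult uses the convention 0 * oo = 0 *)
Definition hyperbolic_norm (hn : J -> Rbar) : Prop :=
  (forall v, Rbar_le (Finite 0) (hn v)) /\
  hn zero = Finite 0 /\
  (forall l1 l2 v1 v2, 0 <= l1 -> 0 <= l2 ->
     Rbar_le (Rbar_plus (Rbar_mult (Finite l1) (hn v1)) (Rbar_mult (Finite l2) (hn v2)))
             (hn (add (smul l1 v1) (smul l2 v2)))).

Definition chrono (hn : J -> Rbar) (v w : J) : Prop :=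
  exists z, Rbar_lt (Finite 0) (hn z) /\ add v z = w.

End Cones.

Inductive gen_open (T : Type) (S : (T -> Prop) -> Prop) : (T -> Prop) -> Prop :=
| go_sub U : S U -> gen_open S U
| go_full : gen_open S (fun _ => True)
| go_inter U V : gen_open S U -> gen_open S V -> gen_open S (fun x => U x /\ V x)
| go_union (F : (T -> Prop) -> Prop) :
    (forall U, F U -> gen_open S U) -> gen_open S (fun x => exists U, F U /\ U x)
| go_ext U V : gen_open S U -> (forall x, U x <-> V x) -> gen_open S V.

Definition chrono_subbase (J : Type) (add : J -> J -> J) (hn : J -> Rbar)
  (U : J -> Prop) : Prop :=
  exists v, (forall w, U w <-> chrono add hn v w) \/ (forall w, U w <-> chrono add hn w v).

Definition chrono_open (J : Type) (add : J -> J -> J) (hn : J -> Rbar) :=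
  gen_open (chrono_subbase add hn).

Definition dense_in (T : Type) (opn : (T -> Prop) -> Prop) (A : T -> Prop) : Prop :=
  forall U, opn U -> (exists x, U x) -> exists x, U x /\ A x.

(* Every nonempty chronologically open set contains an order interval [l, u]
   which in turn contains a nonempty open set: a point p of a basic open set
   I^+(a_1) ∩ ... ∩ I^-(b_k) can be interpolated, a_i ≪ c_i ≪ p ≪ d_j ≪ b_j
   (halve the gaps, hn being superadditive), and then l := sup c_i,
   u := inf d_j, with I^+(c_i) ∩ I^-(d_j) as the open core.  Given the open
   dense sets U_n, such "traps" can therefore be nested, each interval lying
   inside the previous core and inside U_n.  The intervals decrease, and any
   point between sup_n l_n and inf_n u_n (it exists since all infima exist)
   lies in every U_n and in the first interval. *)

From Stdlib Require Import Reals List Lra Lia ClassicalEpsilon.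
From Coquelicot Require Import Rbar.
Open Scope R_scope.
Set Implicit Arguments.

Lemma Rbar_mult_1_l (x : Rbar) : Rbar_mult (Finite 1) x = x.
Proof.
  destruct x as [x| |]; unfold Rbar_mult, Rbar_mult'; simpl; try now rewrite Rmult_1_l.
  all: destruct (Rle_dec 0 1); try lra; destruct (Rle_lt_or_eq_dec 0 1 r); try lra; reflexivity.
Qed.

Lemma Rbar_mult_pos (l : R) (x : Rbar) :
  0 < l -> Rbar_lt (Finite 0) x -> Rbar_lt (Finite 0) (Rbar_mult (Finite l) x).
Proof.
  intros Hl Hx; destruct x as [x| |]; unfold Rbar_mult, Rbar_mult'; simpl in *; try easy.
  - now apply Rmult_lt_0_compat.
  - destruct (Rle_dec 0 l); try lra; destruct (Rle_lt_or_eq_dec 0 l r); simpl; auto; lra.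
Qed.

Lemma In_choice {A B : Type} (P : A -> B -> Prop) (l : list A) :
  (forall a, In a l -> exists b, P a b) ->
  exists l' : list B, (forall a, In a l -> exists b, In b l' /\ P a b) /\
                      (forall b, In b l' -> exists a, In a l /\ P a b).
Proof.
  induction l as [|a l IH]; intros Hl.
  - exists nil; split; intros ? [].
  - destruct IH as (l' & Hto & Hfrom); [intros; apply Hl; now right|].
    destruct (Hl a (or_introl eq_refl)) as [b Hab].
    exists (b :: l'); split.
    + intros a' [<-|Ha'].
      * exists b; split; [now left | exact Hab].
      * destruct (Hto a' Ha') as (b' & Hb' & Hab'); exists b'; split; [now right | exact Hab'].
    + intros b' [<-|Hb'].
      * exists a; split; [now left | exact Hab].
      * destruct (Hfrom b' Hb') as (a' & Ha' & Hab'); exists a'; split; [now right | exact Hab'].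
Qed.

Lemma nat_dependent_choice {A : Type} (P : A -> Prop) (R : nat -> A -> A -> Prop) (a0 : A) :
  P a0 -> (forall n a, P a -> exists b, P b /\ R n a b) ->
  exists f : nat -> A, f O = a0 /\ forall n, P (f n) /\ R n (f n) (f (S n)).
Proof.
  intros H0 Hstep.
  set (next n a := epsilon (inhabits a0) (fun b => P b /\ R n a b)).
  assert (Hnext : forall n a, P a -> P (next n a) /\ R n a (next n a)).
  { intros n a Ha; apply epsilon_spec, Hstep, Ha. }
  set (f := nat_rect (fun _ => A) a0 next).
  assert (HP : forall n, P (f n)) by (induction n; [exact H0 | apply Hnext, IHn]).
  exists f; split; [reflexivity|].
  intros n; split; [apply HP | apply Hnext, HP].
Qed.

Lemma gen_open_In_inter {T A : Type} (S : (T -> Prop) -> Prop) (V : A -> T -> Prop)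
  (l : list A) :
  (forall a, S (V a)) -> gen_open S (fun x => forall a, In a l -> V a x).
Proof.
  intros HV; induction l as [|a l IH].
  - eapply go_ext; [apply go_full | simpl; tauto].
  - eapply go_ext; [apply go_inter; [apply go_sub, (HV a) | exact IH]|].
    intros x; simpl; split.
    + intros [Ha Hl] b [<-|Hb]; auto.
    + intros H; split; auto.
Qed.

Section ChronologicalTopology.

Variables (J : Type) (add : J -> J -> J) (zero : J) (smul : R -> J -> J) (hn : J -> Rbar).
Hypothesis Hpw : prewedge add zero smul.
Hypothesis Hhn : hyperbolic_norm add zero smul hn.

Notation jle := (jle add).
Notation chrono := (chrono add hn).
Notation chrono_open := (chrono_open add hn).

Lemma jle_refl v : jle v v.
Proof. destruct Hpw as (HC & _ & H0 & _). exists zero; rewrite HC; apply H0. Qed.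

Lemma jle_trans u v w : jle u v -> jle v w -> jle u w.
Proof. destruct Hpw as (_ & HA & _). intros [y <-] [z <-]; exists (add y z); now rewrite HA. Qed.

Lemma hn_add_pos z y : Rbar_lt (Finite 0) (hn z) -> Rbar_lt (Finite 0) (hn (add z y)).
Proof.
  destruct Hpw as (_ & _ & _ & _ & _ & H1 & _); destruct Hhn as (Hge & _ & Hsup).
  intros Hz; pose proof (Hsup 1 1 z y ltac:(lra) ltac:(lra)) as Hzy.
  rewrite !H1, !Rbar_mult_1_l in Hzy.
  eapply Rbar_lt_le_trans; [exact Hz|]; eapply Rbar_le_trans; [|exact Hzy].
  rewrite <- (Rbar_plus_0_r (hn z)) at 1.
  apply Rbar_plus_le_compat; [apply Rbar_le_refl | apply Hge].
Qed.

Lemma hn_half_pos z : Rbar_lt (Finite 0) (hn z) -> Rbar_lt (Finite 0) (hn (smul (/2) z)).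
Proof.
  destruct Hpw as (HC & _ & H0 & _ & Hs0 & _); destruct Hhn as (_ & _ & Hsup).
  intros Hz; pose proof (Hsup (/2) 0 z z ltac:(lra) ltac:(lra)) as Hhalf.
  rewrite Hs0, HC, H0, Rbar_mult_0_l, Rbar_plus_0_r in Hhalf.
  eapply Rbar_lt_le_trans; [|exact Hhalf]; apply Rbar_mult_pos; [lra | exact Hz].
Qed.

Lemma chrono_jle a b : chrono a b -> jle a b.
Proof. intros [z [_ H]]; now exists z. Qed.

Lemma chrono_jle_trans a b c : chrono a b -> jle b c -> chrono a c.
Proof.
  destruct Hpw as (_ & HA & _). intros [z [Hz <-]] [y <-].
  exists (add z y); split; [now apply hn_add_pos | now rewrite HA].
Qed.

Lemma jle_chrono_trans a b c : jle a b -> chrono b c -> chrono a c.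
Proof.
  destruct Hpw as (HC & HA & _). intros [y <-] [z [Hz <-]].
  exists (add y z); split; [rewrite HC; now apply hn_add_pos | now rewrite HA].
Qed.

Lemma chrono_interpolate a c : chrono a c -> exists b, chrono a b /\ chrono b c.
Proof.
  destruct Hpw as (_ & HA & _ & _ & _ & H1 & HD & _). intros [z [Hz <-]].
  set (h := smul (/2) z); pose proof (hn_half_pos z Hz) as Hh.
  exists (add a h); split; exists h; split; auto.
  rewrite <- HA; f_equal; unfold h.
  rewrite <- HD by lra; replace (/2 + /2) with 1 by lra; apply H1.
Qed.

Definition chrono_box (las ubs : list J) (w : J) : Prop :=
  (forall a, In a las -> chrono a w) /\ (forall b, In b ubs -> chrono w b).

Lemma chrono_box_open las ubs : chrono_open (chrono_box las ubs).
Proof.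
  apply go_inter; apply gen_open_In_inter; intros v; exists v;
    [left | right]; reflexivity.
Qed.

Lemma chrono_box_app l1 u1 l2 u2 w :
  chrono_box (l1 ++ l2) (u1 ++ u2) w <-> chrono_box l1 u1 w /\ chrono_box l2 u2 w.
Proof.
  unfold chrono_box; split.
  - intros [Hl Hu]; repeat split; intros; (apply Hl || apply Hu); apply in_or_app; auto.
  - intros [[Hl1 Hu1] [Hl2 Hu2]]; split; intros x Hx; apply in_app_or in Hx; intuition.
Qed.

Lemma chrono_open_box_nbhd U : chrono_open U -> forall p, U p ->
  exists las ubs, chrono_box las ubs p /\ forall w, chrono_box las ubs w -> U w.
Proof.
  induction 1 as [U [v [Hv|Hv]] | | U V _ IHU _ IHV | F _ IH | U V _ IH Hext];
    intros p Hp.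
  - exists (v :: nil), nil; split.
    + split; [intros a [<-|[]]; now apply Hv | intros b []].
    + intros w [H _]; apply Hv, H; now left.
  - exists nil, (v :: nil); split.
    + split; [intros a [] | intros b [<-|[]]; now apply Hv].
    + intros w [_ H]; apply Hv, H; now left.
  - exists nil, nil; split; [split; intros ? [] | auto].
  - destruct Hp as [HpU HpV].
    destruct (IHU p HpU) as (l1 & u1 & Hp1 & HU1), (IHV p HpV) as (l2 & u2 & Hp2 & HV2).
    exists (l1 ++ l2), (u1 ++ u2); split; [now apply chrono_box_app|].
    intros w Hw; apply chrono_box_app in Hw; split; [apply HU1 | apply HV2]; apply Hw.
  - destruct Hp as [V [HV Vp]]; destruct (IH V HV p Vp) as (l & u & Hp & HVw).
    exists l, u; split; [exact Hp | intros w Hw; exists V; auto].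
  - apply Hext in Hp; destruct (IH p Hp) as (l & u & Hp' & HUw).
    exists l, u; split; [exact Hp' | intros w Hw; apply Hext; auto].
Qed.

Lemma chrono_box_interpolate las ubs p : chrono_box las ubs p ->
  exists las' ubs', chrono_box las' ubs' p /\
    forall w, (forall c, In c las' -> jle c w) -> (forall d, In d ubs' -> jle w d) ->
      chrono_box las ubs w.
Proof.
  intros [Hl Hu].
  destruct (In_choice (fun a c => chrono a c /\ chrono c p) las) as (las' & Hto & Hfrom).
  { intros a Ha; now apply chrono_interpolate, Hl. }
  destruct (In_choice (fun b d => chrono d b /\ chrono p d) ubs) as (ubs' & Hto' & Hfrom').
  { intros b Hb; destruct (chrono_interpolate (Hu b Hb)) as (d & Hpd & Hdb).
    now exists d. }
  exists las', ubs'; split; [split|].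
  - intros c Hc; destruct (Hfrom c Hc) as (a & _ & _ & Hcp); exact Hcp.
  - intros d Hd; destruct (Hfrom' d Hd) as (b & _ & _ & Hpd); exact Hpd.
  - intros w Hlw Hwu; split.
    + intros a Ha; destruct (Hto a Ha) as (c & Hc & Hac & _).
      exact (chrono_jle_trans Hac (Hlw c Hc)).
    + intros b Hb; destruct (Hto' b Hb) as (d & Hd & Hdb & _).
      exact (jle_chrono_trans (Hwu d Hd) Hdb).
Qed.

Hypothesis Hinf : forall A : J -> Prop, exists i, is_inf add A i.

Lemma exists_sup (A : J -> Prop) : exists s, is_sup add A s.
Proof.
  destruct (Hinf (is_ub add A)) as [i [Hlb Hgr]]; exists i; split.
  - intros a Ha; apply Hgr; intros u Hu; now apply Hu.
  - intros u Hu; now apply Hlb.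
Qed.

Definition between (l u w : J) : Prop := jle l w /\ jle w u.

Lemma nested_intervals_meet (l u : nat -> J) :
  (forall n, jle (l n) (u n)) -> (forall n, jle (l n) (l (S n))) ->
  (forall n, jle (u (S n)) (u n)) ->
  exists x, forall n, between (l n) (u n) x.
Proof.
  intros Hlu Hl Hu.
  assert (Hlmono : forall m n, (m <= n)%nat -> jle (l m) (l n)).
  { induction 1; [apply jle_refl | eapply jle_trans; eauto]. }
  assert (Humono : forall m n, (m <= n)%nat -> jle (u n) (u m)).
  { induction 1; [apply jle_refl | eapply jle_trans; eauto]. }
  assert (Hlu' : forall m n, jle (l m) (u n)).
  { intros m n; apply jle_trans with (l (max m n)); [apply Hlmono; lia|].
    apply jle_trans with (u (max m n)); [apply Hlu | apply Humono; lia]. }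
  destruct (exists_sup (fun w => exists m, w = l m)) as [x [Hub Hleast]].
  exists x; intros n; split.
  - apply Hub; now exists n.
  - apply Hleast; intros a [m ->]; apply Hlu'.
Qed.

Record trap : Type := Trap { lo : J; hi : J; core : J -> Prop }.

Definition is_trap (t : trap) : Prop :=
  chrono_open (core t) /\ (exists x, core t x) /\
  forall w, core t w -> between (lo t) (hi t) w.

Lemma trap_lo_hi t : is_trap t -> jle (lo t) (hi t).
Proof. intros (_ & [x Hx] & Hb); destruct (Hb x Hx); eapply jle_trans; eauto. Qed.

Lemma chrono_open_trap U : chrono_open U -> forall p, U p ->
  exists t, is_trap t /\ forall w, between (lo t) (hi t) w -> U w.
Proof.
  intros HU p Hp.
  destruct (chrono_open_box_nbhd HU p Hp) as (las & ubs & Hbox & HboxU).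
  destruct (chrono_box_interpolate Hbox) as (las' & ubs' & Hbox' & Hbetween).
  destruct (exists_sup (fun c => In c las')) as [l [Hlub Hlleast]].
  destruct (Hinf (fun d => In d ubs')) as [u [Hulb Huglb]].
  exists (Trap l u (chrono_box las' ubs')); split; [split; [|split]|].
  - apply chrono_box_open.
  - now exists p.
  - intros w [Hw1 Hw2]; split.
    + apply Hlleast; intros c Hc; now apply chrono_jle, Hw1.
    + apply Huglb; intros d Hd; now apply chrono_jle, Hw2.
  - intros w [Hlw Hwu]; apply HboxU, Hbetween.
    + intros c Hc; exact (jle_trans (Hlub c Hc) Hlw).
    + intros d Hd; exact (jle_trans Hwu (Hulb d Hd)).
Qed.

Lemma trap_refine t V : is_trap t -> chrono_open V -> dense_in chrono_open V ->
  exists t', is_trap t' /\ forall w, between (lo t') (hi t') w -> core t w /\ V w.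
Proof.
  intros (Hopen & Hne & _) HV Hdense.
  destruct (Hdense (core t) Hopen Hne) as (y & Hy).
  exact (chrono_open_trap (go_inter Hopen HV) y Hy).
Qed.

Lemma trap_nested t t' : is_trap t -> is_trap t' ->
  (forall w, between (lo t') (hi t') w -> core t w) ->
  jle (lo t) (lo t') /\ jle (hi t') (hi t).
Proof.
  intros (_ & _ & Ht) Ht' Hsub; pose proof (trap_lo_hi Ht') as Hlh.
  split.
  - apply Ht, Hsub; split; [apply jle_refl | exact Hlh].
  - apply Ht, Hsub; split; [exact Hlh | apply jle_refl].
Qed.

End ChronologicalTopology.

Theorem mainTheorem18 (J : Type) (add : J -> J -> J) (zero : J) (smul : R -> J -> J)
  (hn : J -> Rbar)
  (HJ : cone_with_joins add zero smul)
  (Hhn : hyperbolic_norm add zero smul hn)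
  (U : nat -> J -> Prop)
  (Hopen : forall n, chrono_open add hn (U n))
  (Hdense : forall n, dense_in (chrono_open add hn) (U n)) :
  dense_in (chrono_open add hn) (fun x => forall n, U n x).
Proof.
  destruct HJ as [[[Hpw _] _] [Hinf _]].
  intros W HW [p Wp].
  destruct (chrono_open_trap Hpw Hhn Hinf HW p Wp) as (t0 & Ht0 & Ht0W).
  destruct (nat_dependent_choice (is_trap add hn)
    (fun n t t' => forall w, between add (lo t') (hi t') w -> core t w /\ U n w) t0 Ht0)
    as (t & Ht_0 & Ht).
  { intros n s Hs; exact (trap_refine Hpw Hhn Hinf Hs (Hopen n) (Hdense n)). }
  assert (Hnest : forall n, jle add (lo (t n)) (lo (t (S n))) /\
                            jle add (hi (t (S n))) (hi (t n))).
  { intros n; destruct (Ht n) as [Htn Hsub].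
    exact (trap_nested Hpw Htn (proj1 (Ht (S n))) (fun w Hw => proj1 (Hsub w Hw))). }
  destruct (nested_intervals_meet Hpw Hinf (fun n => lo (t n)) (fun n => hi (t n)))
    as [x Hx].
  - intros n; exact (trap_lo_hi Hpw (proj1 (Ht n))).
  - intros n; apply Hnest.
  - intros n; apply Hnest.
  - exists x; split.
    + apply Ht0W; rewrite <- Ht_0; apply Hx.
    + intros n; apply (proj2 (Ht n) x (Hx (S n))).
Qed.
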